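(* Let $G$ and $H$ be graphs. If $G\in\operatorname{obs}^\ast(H)$, then there is a vertex $v\in V(G)$ such that $G-v\cong H$.
   Context: All graphs are finite, simple and loopless. A full-homomorphism $\varphi\colon G\to H$ is a map $V(G)\to V(H)$ such that for all $x,y\in V(G)$, $xy\in E(G)$ if and only if $\varphi(x)\varphi(y)\in E(H)$. A full $H$-colouring of $G$ is a full-homomorphism $G\to H$. A minimal $H$-obstruction is a graph $G$ that admits no full $H$-colouring while every proper induced subgraph of $G$ admits one; $\operatorname{obs}(H)$ denotes the set of minimal $H$-obstructions (up to isomorphism), and $\operatorname{obs}^\ast(H)$ the set of minimal $H$-obstructions on exactly $|V(H)|+1$ vertices. *)

From mathcomp Require Import all_boot.
Set Implicit Arguments.
Unset Strict Implicit.
Unset Printing Implicit Defensive.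

Record graph := Graph {
  vert : finType;
  adj : rel vert;
  adj_sym : symmetric adj;
  adj_irr : irreflexive adj }.

Definition full_hom (G H : graph) (f : vert G -> vert H) : Prop :=
  forall x y : vert G, adj x y = adj (f x) (f y).

Definition full_colourable (G H : graph) : Prop :=
  exists f : vert G -> vert H, full_hom f.

Section Induced.
Variables (G : graph) (S : {set vert G}).
Definition ind_vert : finType := {x : vert G | x \in S}.
Definition ind_adj : rel ind_vert := fun x y => adj (val x) (val y).
Lemma ind_adj_sym : symmetric ind_adj.
Proof. by move=> x y; rewrite /ind_adj adj_sym. Qed.
Lemma ind_adj_irr : irreflexive ind_adj.
Proof. by move=> x; rewrite /ind_adj adj_irr. Qed.
Definition induced : graph := Graph ind_adj_sym ind_adj_irr.
End Induced.

Definition delete_vertex (G : graph) (v : vert G) : graph := induced [set~ v].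

Definition min_obstruction (G H : graph) : Prop :=
  ~ full_colourable G H /\
  forall S : {set vert G}, S \proper [set: vert G] -> full_colourable (induced S) H.

Definition obs_star (G H : graph) : Prop :=
  min_obstruction G H /\ #|vert G| = #|vert H| + 1.

Definition isomorphic (G H : graph) : Prop :=
  exists f : vert G -> vert H, bijective f /\ forall x y : vert G, adj x y = adj (f x) (f y).

(* A minimal H-obstruction G has no twins: two distinct vertices with equal
   neighbourhoods could be merged, and a full H-colouring of G - x would then
   colour G.  For a vertex v, a full colouring f of G - v into H is a map
   between graphs of the same order; if it is injective, G - v is isomorphic
   to H.  Otherwise f identifies two vertices x, y, which are then twins in
   G - v, hence distinguished only by v in G: N(x) = N(y) + v, say.  If this
   happened for every v, a short exchange argument shows that every vertex x
   occurring in such a pair is itself the smaller vertex of another pair, with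
   a strictly larger neighbourhood -- impossible in a finite graph. *)
From mathcomp Require Import all_boot.

Set Implicit Arguments.
Unset Strict Implicit.
Unset Printing Implicit Defensive.

Lemma proper_setC1 (T : finType) (v : T) : [set~ v] \proper [set: T].
Proof. by apply/properP; split; [apply/subsetP | exists v; rewrite !inE ?eqxx]. Qed.

Lemma card_delete_vertex (G : graph) (v : vert G) :
  #|vert (delete_vertex v)| = #|vert G|.-1.
Proof. by rewrite card_sig -(cardsC1 v); apply: eq_card. Qed.

Lemma full_hom_twins (G H : graph) (f : vert G -> vert H) (x y : vert G) :
  full_hom f -> f x = f y -> forall z, adj x z = adj y z.
Proof. by move=> hom_f fxy z; rewrite !hom_f fxy. Qed.

Lemma full_hom_inj_isomorphic (G H : graph) (f : vert G -> vert H) :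
  full_hom f -> injective f -> #|vert G| = #|vert H| -> isomorphic G H.
Proof.
move=> hom_f inj_f cardGH; exists f; split=> //.
by apply: inj_card_bij inj_f _; rewrite cardGH.
Qed.

Lemma twins_full_colourable (G H : graph) (x y : vert G) :
  x != y -> (forall z, adj x z = adj y z) ->
  full_colourable (delete_vertex x) H -> full_colourable G H.
Proof.
move=> neq_xy twin_xy [f hom_f].
have y_del : y \in [set~ x] by rewrite !inE eq_sym.
pose merge z : vert (delete_vertex x) := insubd (exist _ y y_del) z.
have merge_val z : val (merge z) = if z == x then y else z.
  by rewrite val_insubd !inE; case: eqP.
have twin_xy' z : adj z x = adj z y by rewrite adj_sym twin_xy adj_sym.
exists (f \o merge) => z w; rewrite -hom_f /= /ind_adj !merge_val.
by do 2!case: eqP => [->|_] //; rewrite twin_xy twin_xy' !adj_irr.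
Qed.

Lemma min_obstruction_twin_free (G H : graph) (x y : vert G) :
  min_obstruction G H -> (forall z, adj x z = adj y z) -> x = y.
Proof.
move=> [not_col col_sub] twin_xy; have [//|neq_xy] := eqVneq x y.
case: not_col; apply: twins_full_colourable neq_xy twin_xy _.
by apply: col_sub; apply: proper_setC1.
Qed.

Section Splits.
Variable G : graph.
Implicit Types v x y z : vert G.

Definition nbhd x : {set vert G} := [set z | adj x z].

Definition splits v x y : bool :=
  [&& adj x v, ~~ adj y v & [forall z, (z != v) ==> (adj x z == adj y z)]].

Lemma splitsP v x y :
  reflect [/\ adj x v, ~~ adj y v & forall z, z != v -> adj x z = adj y z]
          (splits v x y).
Proof.
apply: (iffP and3P) => [[-> -> /forallP agree]|[-> -> agree]]; split=> //.
  by move=> z neq_zv; apply/eqP; exact: implyP (agree z) neq_zv.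
by apply/forallP => z; apply/implyP => /agree ->.
Qed.

Lemma splits_nbhd_proper {v x y} : splits v x y -> nbhd y \proper nbhd x.
Proof.
case/splitsP=> adj_xv nadj_yv agree; apply/properP; split.
  apply/subsetP=> z; rewrite !inE => adj_yz.
  by rewrite agree //; apply: contraNneq nadj_yv => <-.
by exists v; rewrite !inE ?adj_xv.
Qed.

Lemma splits_or_splits v x y :
  (forall z, z != v -> adj x z = adj y z) -> adj x v != adj y v ->
  splits v x y || splits v y x.
Proof.
move=> agree; case adj_xv: (adj x v); case adj_yv: (adj y v) => // _.
  by apply/orP; left; apply/splitsP; rewrite adj_yv.
by apply/orP; right; apply/splitsP; split=> [||z /agree ->]; rewrite ?adj_xv.
Qed.

Section EveryVertexSplits.
Hypothesis every_vertex_splits : forall v, exists x y, splits v x y.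

(* If v splits (x, y), the pair split by x is forced to be (v, d) for some d,
   and the pair split by that d is then forced to end in x. *)
Lemma splits_larger {v x y} : splits v x y -> exists d a, splits d a x.
Proof.
case/splitsP=> adj_xv nadj_yv agree_xy.
have neq_xy : x != y by apply: contraNneq nadj_yv => <-.
have [c [d /splitsP[adj_cx nadj_dx agree_cd]]] := every_vertex_splits x.
have eq_cv : c = v.
  apply/eqP; apply: contraNT nadj_dx => neq_cv.
  have adj_cy : adj c y by rewrite adj_sym -agree_xy // adj_sym.
  have adj_yd : adj y d by rewrite adj_sym -agree_cd // eq_sym.
  have neq_dv : d != v by apply: contraNneq nadj_yv => <-.
  by rewrite adj_sym agree_xy.
subst c; have [a [b /splitsP[adj_ad nadj_bd agree_ab]]] := every_vertex_splits d.
have eq_bx : b = x.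
  apply/eqP; apply: contraNT nadj_bd => neq_bx.
  have neq_ax : a != x by apply: contraTneq adj_ad => ->; rewrite adj_sym.
  have adj_va : adj v a by rewrite agree_cd // adj_sym.
  have neq_vd : v != d by apply: contraNneq nadj_dx => <-; rewrite adj_sym.
  have adj_vb : adj v b by rewrite adj_sym -agree_ab // adj_sym.
  by rewrite adj_sym -agree_cd.
by exists d, a; apply/splitsP; rewrite -eq_bx.
Qed.

End EveryVertexSplits.

Lemma not_every_vertex_splits v0 : ~ (forall v, exists x y, splits v x y).
Proof.
move=> every_splits; have [x0 [y0 split0]] := every_splits v0.
pose splitting x := [exists v, exists y, splits v x y].
have splitting_x0 : splitting x0.
  by apply/existsP; exists v0; apply/existsP; exists y0.
case: (@arg_maxnP _ _ splitting (fun x => #|nbhd x|) splitting_x0).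
move=> x /existsP[v /existsP[y /(splits_larger every_splits)[d [a split_a]]]] max_x.
have /max_x /= le_ax : splitting a.
  by apply/existsP; exists d; apply/existsP; exists x.
by have := proper_card (splits_nbhd_proper split_a); rewrite ltnNge le_ax.
Qed.

Lemma exists_nonsplitting_vertex v0 : exists v, forall x y, ~~ splits v x y.
Proof.
have [/existsP[v nsplit]|/existsPn every_splits] :=
  boolP [exists v, [forall x, [forall y, ~~ splits v x y]]].
  by exists v => x y; move/forallP/(_ x)/forallP: nsplit.
case: (not_every_vertex_splits v0) => v.
have /forallPn[x /forallPn[y /negPn split_v]] := every_splits v.
by exists x, y.
Qed.

End Splits.

Lemma obs_star_delete_vertex (G H : graph) (v : vert G) :
  obs_star G H -> isomorphic (delete_vertex v) H \/ exists x y, splits v x y.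
Proof.
move=> [min_GH cardGH]; have [f hom_f] := min_GH.2 _ (proper_setC1 v).
have [/injectiveP inj_f|/injectivePn[u1 [u2 neq_u fu]]] := boolP (injectiveb f).
  left; apply: full_hom_inj_isomorphic hom_f inj_f _.
  by rewrite card_delete_vertex cardGH addn1.
right; have twins_u := full_hom_twins hom_f fu.
have agree z : z != v -> adj (val u1) z = adj (val u2) z.
  move=> neq_zv; have z_del : z \in [set~ v] by rewrite !inE.
  exact: twins_u (exist _ z z_del).
have differ : adj (val u1) v != adj (val u2) v.
  apply: contra neq_u => /eqP adj_v; apply/eqP/val_inj.
  apply: (min_obstruction_twin_free min_GH) => z.
  by have [->|/agree] := eqVneq z v.
by case/orP: (splits_or_splits agree differ) => split_v; do 2!eexists; exact: split_v.
Qed.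

Theorem mainTheorem9 (G H : graph) :
  obs_star G H -> exists v : vert G, isomorphic (delete_vertex v) H.
Proof.
move=> obs_GH; have cardGH := obs_GH.2.
have /card_gt0P[v0 _] : 0 < #|vert G| by rewrite cardGH addn1.
have [v nsplit_v] := exists_nonsplitting_vertex v0.
exists v; have [//|[x [y split_v]]] := obs_star_delete_vertex v obs_GH.
by move: (nsplit_v x y); rewrite split_v.
Qed.
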